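(* Consider the multi-element (three spatial elements, periodic), single-slab space-time SBP scheme $$\mathsf D_t\boldsymbol\rho+\tilde{\mathsf D}_x\langle v\boldsymbol g\rangle=-\sigma_a\boldsymbol\rho-\mathsf H_t^{-1}\mathsf t_B\mathsf t_B^\top(\boldsymbol\rho-\boldsymbol\rho(0)),$$ $$\mathsf D_t\boldsymbol g_k+\tfrac{v_k}{\varepsilon}\tilde{\mathsf D}_x\boldsymbol g_k-\tfrac1\varepsilon\langle v\tilde{\mathsf D}_x\boldsymbol g\rangle+\tfrac{v_k}{\varepsilon^2}\tilde{\mathsf D}_x\boldsymbol\rho=-\Big(\tfrac{\sigma_s}{\varepsilon^2}+\sigma_a\Big)\boldsymbol g_k-\mathsf H_t^{-1}\mathsf t_B\mathsf t_B^\top(\boldsymbol g_k-\boldsymbol g_k(0)),\quad k=1,\dots,n_v.$$ This scheme is asymptotic preserving: for fixed discretization, in the formal limit $\varepsilon\to0$ (assuming the discrete derivative approximations remain bounded) it reduces to $\mathsf D_t\boldsymbol\rho=\tilde{\mathsf D}_x\big(\tfrac{\langle v^2\rangle}{\sigma_s}\tilde{\mathsf D}_x\boldsymbol\rho\big)-\sigma_a\boldsymbol\rho-\mathsf H_t^{-1}\mathsf t_B\mathsf t_B^\top(\boldsymbol\rho-\boldsymbol\rho(0))$, a consistent and stable discretization of $\partial_t\rho=\langle v^2\rangle\partial_x\big(\tfrac1{\sigma_s}\partial_x\rho\big)-\sigma_a\rho$.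
   Context: SBP operators: $\bar{\mathsf D}=\bar{\mathsf H}^{-1}\bar{\mathsf Q}$ on nodes $x_0<\dots<x_n$ is a degree-$p$ SBP approximation of $d/dx$ if it differentiates monomials of degree $\le p$ exactly, $\bar{\mathsf H}$ is diagonal symmetric positive definite, and $\bar{\mathsf Q}+\bar{\mathsf Q}^\top=\bar{\mathsf E}=\bar{\boldsymbol t}_R\bar{\boldsymbol t}_R^\top-\bar{\boldsymbol t}_L\bar{\boldsymbol t}_L^\top=\mathrm{diag}(-1,0,\dots,0,1)$, $\bar{\boldsymbol t}_L,\bar{\boldsymbol t}_R$ first/last unit vectors. $\bar{\mathsf D}_x=\bar{\mathsf H}_x^{-1}\bar{\mathsf Q}_x$ on $n_x+1$ spatial nodes per element, $\bar{\mathsf S}_x=\bar{\mathsf Q}_x-\frac12\bar{\mathsf E}_x$; $\bar{\mathsf D}_t=\bar{\mathsf H}_t^{-1}\bar{\mathsf Q}_t$ on $n_t+1$ temporal nodes with first/last unit vectors $\bar{\boldsymbol t}_B,\bar{\boldsymbol t}_T$. $\tilde{\bar{\mathsf D}}^G_x=(\mathsf I_3\otimes\bar{\mathsf H}_x^{-1})\tilde{\bar{\mathsf Q}}^G_x$, with $\tilde{\bar{\mathsf Q}}^G_x$ the $3\times3$ block matrix having diagonal blocks $\bar{\mathsf S}_x$, blocks $(1,2),(2,3),(3,1)$ equal to $\frac12\bar{\boldsymbol t}_R\bar{\boldsymbol t}_L^\top$, blocks $(2,1),(3,2),(1,3)$ equal to $-\frac12\bar{\boldsymbol t}_L\bar{\boldsymbol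 t}_R^\top$. $\tilde{\mathsf D}_x=\mathsf I_{n_t}\otimes\tilde{\bar{\mathsf D}}^G_x$, $\mathsf D_t=\bar{\mathsf D}_t\otimes\mathsf I_3\otimes\mathsf I_{n_x}$, $\mathsf H_t=\bar{\mathsf H}_t\otimes\mathsf I_3\otimes\mathsf I_{n_x}$, $\mathsf t_B=\bar{\boldsymbol t}_B\otimes\mathsf I_3\otimes\mathsf I_{n_x}$ ($\mathsf I_{n_x},\mathsf I_{n_t}$ identities of sizes $n_x+1,n_t+1$). Velocity nodes $v_k$, weights $\omega_k$ with $\sum\omega_k=1$, $\sum\omega_kv_k=0$; $\langle\boldsymbol a\rangle=\sum\omega_k\boldsymbol a_k$, $\langle v^2\rangle=\sum\omega_kv_k^2$. $\varepsilon>0$, $\sigma_s>0$, $\sigma_a\ge0$. A scheme is asymptotic preserving if, for fixed discretization parameters, in the limit $\varepsilon\to0$ it becomes a consistent (and stable) discretization of the macroscopic limit equation; stability of the limit scheme means the final-time discrete energy is bounded by initial-data terms. *)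

From HB Require Import structures.
From mathcomp Require Import all_boot all_order all_algebra.
From mathcomp Require Import all_classical all_reals all_analysis.
From mathcomp Require Export mxtens.

Unset Printing Implicit Defensive.

Import Order.TTheory GRing.Theory Num.Theory numFieldNormedType.Exports.
Local Open Scope ring_scope.

Definition tfirst (R : pzRingType) (n : nat) : 'cV[R]_n.+1 := delta_mx ord0 0.
Definition tlast (R : pzRingType) (n : nat) : 'cV[R]_n.+1 := delta_mx ord_max 0.

Definition Emx (R : pzRingType) (n : nat) : 'M[R]_n.+1 :=
  tlast R n *m (tlast R n)^T - tfirst R n *m (tfirst R n)^T.

Definition is_SBP (R : realFieldType) (n p : nat) (x : 'I_n.+1 -> R)
  (H Q : 'M[R]_n.+1) : Prop :=
  [/\ (forall i j : 'I_n.+1, (i < j)%N -> x i < x j),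
      is_diag_mx H,
      (forall i, 0 < H i i),
      Q + Q^T = Emx R n
    & forall m : nat, (m <= p)%N ->
        invmx H *m Q *m (\col_i (x i ^+ m)) = \col_i (m%:R * x i ^+ m.-1)].

Definition Smx (R : realFieldType) (n : nat) (Q : 'M[R]_n.+1) : 'M[R]_n.+1 :=
  Q - 2^-1 *: Emx R n.

(* Entry (mxtens_index (a,i), mxtens_index (b,j)) is entry (i,j) of block (a,b). *)
Definition QGblock (R : realFieldType) (n : nat) (Q : 'M[R]_n.+1) (a b : 'I_3)
  : 'M[R]_n.+1 :=
  if a == b then Smx R n Q
  else if b == ordS a then 2^-1 *: (tlast R n *m (tfirst R n)^T)
  else if a == ordS b then - 2^-1 *: (tfirst R n *m (tlast R n)^T)
  else 0.

Definition QG (R : realFieldType) (n : nat) (Q : 'M[R]_n.+1) : 'M[R]_(3 * n.+1) :=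
  \matrix_(k, l) QGblock R n Q (mxtens_unindex k).1 (mxtens_unindex l).1
                   (mxtens_unindex k).2 (mxtens_unindex l).2.

Definition DG (R : realFieldType) (n : nat) (H Q : 'M[R]_n.+1) : 'M[R]_(3 * n.+1) :=
  (1%:M *t invmx H) *m QG R n Q.

(* space-time operators; global index = time index (x) (element (x) node) *)
Definition Dtil (R : realFieldType) (nt nx : nat) (Hx Qx : 'M[R]_nx.+1)
  : 'M[R]_(nt.+1 * (3 * nx.+1)) := (1%:M : 'M[R]_nt.+1) *t DG R nx Hx Qx.
Definition Dtbig (R : realFieldType) (nt nx : nat) (Ht Qt : 'M[R]_nt.+1)
  : 'M[R]_(nt.+1 * (3 * nx.+1)) :=
  (invmx Ht *m Qt) *t (1%:M : 'M[R]_(3 * nx.+1)).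
Definition Htbig (R : realFieldType) (nt nx : nat) (Ht : 'M[R]_nt.+1)
  : 'M[R]_(nt.+1 * (3 * nx.+1)) := Ht *t (1%:M : 'M[R]_(3 * nx.+1)).
Definition tBbig (R : realFieldType) (nt nx : nat)
  : 'M[R]_(nt.+1 * (3 * nx.+1), 1 * (3 * nx.+1)) :=
  tfirst R nt *t (1%:M : 'M[R]_(3 * nx.+1)).
Definition tTbig (R : realFieldType) (nt nx : nat)
  : 'M[R]_(nt.+1 * (3 * nx.+1), 1 * (3 * nx.+1)) :=
  tlast R nt *t (1%:M : 'M[R]_(3 * nx.+1)).

(* SAT term H_t^{-1} t_B (t_B^T u - u0), u0 = t_B^T u(0) the initial data *)
Definition SAT (R : realFieldType) (nt nx : nat) (Ht : 'M[R]_nt.+1)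
  (u : 'cV[R]_(nt.+1 * (3 * nx.+1))) (u0 : 'cV[R]_(1 * (3 * nx.+1))) :=
  invmx (Htbig R nt nx Ht) *m tBbig R nt nx *m ((tBbig R nt nx)^T *m u - u0).

Definition vavg (R : realFieldType) (nv : nat) (V : zmodType) (s : R -> V -> V)
  (w : 'I_nv -> R) (a : 'I_nv -> V) : V := \sum_(k < nv) s (w k) (a k).

Definition micro_macro_scheme (R : realFieldType) (nt nx nv : nat)
  (Ht Qt : 'M[R]_nt.+1) (Hx Qx : 'M[R]_nx.+1) (v w : 'I_nv -> R)
  (sigs siga eps : R) (rho0 : 'cV[R]_(1 * (3 * nx.+1)))
  (g0 : 'I_nv -> 'cV[R]_(1 * (3 * nx.+1)))
  (rho : 'cV[R]_(nt.+1 * (3 * nx.+1))) (g : 'I_nv -> 'cV[R]_(nt.+1 * (3 * nx.+1)))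
  : Prop :=
  let Dt := Dtbig R nt nx Ht Qt in
  let Dx := Dtil R nt nx Hx Qx in
  Dt *m rho + Dx *m vavg R nv _ *:%R w (fun k => v k *: g k)
    = - (siga *: rho) - SAT R nt nx Ht rho rho0
  /\ forall k : 'I_nv,
    Dt *m g k + (v k / eps) *: (Dx *m g k)
      - eps^-1 *: vavg R nv _ *:%R w (fun j => v j *: (Dx *m g j))
      + (v k / eps ^+ 2) *: (Dx *m rho)
    = - ((sigs / eps ^+ 2 + siga) *: g k) - SAT R nt nx Ht (g k) (g0 k).

Definition limit_scheme (R : realFieldType) (nt nx nv : nat)
  (Ht Qt : 'M[R]_nt.+1) (Hx Qx : 'M[R]_nx.+1) (v w : 'I_nv -> R)
  (sigs siga : R) (rho0 : 'cV[R]_(1 * (3 * nx.+1)))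
  (rho : 'cV[R]_(nt.+1 * (3 * nx.+1))) : Prop :=
  let Dx := Dtil R nt nx Hx Qx in
  Dtbig R nt nx Ht Qt *m rho
    = Dx *m ((vavg R nv _ *%R w (fun k => v k ^+ 2) / sigs) *: (Dx *m rho))
      - siga *: rho - SAT R nt nx Ht rho rho0.

Definition energy (R : realFieldType) (nx : nat) (Hx : 'M[R]_nx.+1)
  (u : 'cV[R]_(1 * (3 * nx.+1))) : R :=
  (u^T *m ((1%:M : 'M[R]_1) *t ((1%:M : 'M[R]_3) *t Hx)) *m u) 0 0.

From HB Require Import structures.
From mathcomp Require Import all_boot all_order all_algebra.
From mathcomp Require Import all_classical all_reals all_analysis.
From mathcomp Require Import mxtens ring lra.
Import Order.TTheory GRing.Theory Num.Theory numFieldNormedType.Exports.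
Local Open Scope ring_scope.
Local Open Scope classical_set_scope.

(* Multiplying the kinetic equation for g_k by eps^2 gives
   v_k D_x rho + sigma_s g_k = O(eps), so in the limit g_k obeys Fick's law
   g_k = -(v_k / sigma_s) D_x rho; inserted into the macroscopic equation, the
   flux <v g> becomes -(<v^2> / sigma_s) D_x rho, which is the limit scheme.
   Stability: test the limit scheme against H rho with H = H_t (x) I_3 (x) H_x.
   The SBP property of Q_t turns the time term into half the difference of the
   final and initial-slice energies, the periodic coupling makes H D_x
   skew-adjoint so the diffusion term is -c |D_x rho|^2 <= 0, and the SAT term
   completes a square with the initial data.
   Consistency: on continuous periodic data the interface blocks of Q^G_x
   supply exactly the boundary term E_x / 2 missing from S_x, so D^G_x acts as
   H_x^-1 Q_x on each element, which is exact on polynomials of degree <= p_x. *)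

Lemma big_mxtens (V : nmodType) m n (F : 'I_(m * n) -> V) :
  \sum_k F k = \sum_(a < m) \sum_(b < n) F (mxtens_index (a, b)).
Proof.
rewrite pair_bigA (reindex (@mxtens_index m n)) /=; first by apply: eq_bigr => -[].
exact: onW_bij (Bijective (@mxtens_indexK m n) (@mxtens_unindexK m n)).
Qed.

Lemma tensmx11 (R : pzRingType) m n :
  (1%:M : 'M[R]_m) *t (1%:M : 'M[R]_n) = 1%:M.
Proof.
apply/matrixP => i j.
case: (mxtens_indexP i) => a b; case: (mxtens_indexP j) => c d.
rewrite tensmxE !mxE (can_eq (@mxtens_indexK _ _)) xpair_eqE.
by case: (a == c); case: (b == d); rewrite ?mulr1 ?mulr0.
Qed.

Lemma tensmxDl (R : pzRingType) m n p q (A B : 'M[R]_(m, n)) (C : 'M[R]_(p, q)) :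
  (A + B) *t C = A *t C + B *t C.
Proof. by apply/matrixP => i j; rewrite !mxE mulrDl. Qed.

Lemma tensmxNl (R : pzRingType) m n p q (A : 'M[R]_(m, n)) (C : 'M[R]_(p, q)) :
  (- A) *t C = - (A *t C).
Proof. by apply/matrixP => i j; rewrite !mxE mulNr. Qed.

Lemma tensmxNr (R : pzRingType) m n p q (A : 'M[R]_(m, n)) (C : 'M[R]_(p, q)) :
  A *t (- C) = - (A *t C).
Proof. by apply/matrixP => i j; rewrite !mxE mulrN. Qed.

Lemma invmx_tens (R : fieldType) m n (A : 'M[R]_m.+1) (B : 'M[R]_n.+1) :
  A \in unitmx -> B \in unitmx -> invmx (A *t B) = invmx A *t invmx B.
Proof.
move=> uA uB; have uAB : A *t B \in unitmx by exact: tensmx_unit.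
by rewrite -[RHS]mulmx1 -(mulmxV uAB) mulmxA tensmx_mul !mulVmx // tensmx11 mul1mx.
Qed.

Definition nneg_diag_mx (R : numDomainType) n (D : 'M[R]_n) : Prop :=
  is_diag_mx D /\ forall i, 0 <= D i i.
Arguments nneg_diag_mx {R n}.

Section NonnegDiagonal.
Variable R : numDomainType.

Lemma nneg_diag_mx1 n : nneg_diag_mx (1%:M : 'M[R]_n).
Proof. by split=> [|i]; rewrite ?scalar_mx_is_diag // mxE ler0n. Qed.

Lemma nneg_diag_tens m n (A : 'M[R]_m) (B : 'M[R]_n) :
  nneg_diag_mx A -> nneg_diag_mx B -> nneg_diag_mx (A *t B).
Proof.
move=> [/is_diag_mxP A0 A_ge0] [/is_diag_mxP B0 B_ge0]; split=> [|k]; last first.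
  by case: (mxtens_indexP k) => a b; rewrite tensmxE mulr_ge0.
apply/is_diag_mxP => k l.
case: (mxtens_indexP k) => a b; case: (mxtens_indexP l) => c d.
rewrite val_eqE (can_eq (@mxtens_indexK _ _)) xpair_eqE negb_and tensmxE.
by case/orP => [ac | bd]; [rewrite A0 ?mul0r ?val_eqE | rewrite B0 ?mulr0 ?val_eqE].
Qed.

Lemma nneg_diag_trmx n (D : 'M[R]_n) : nneg_diag_mx D -> D^T = D.
Proof.
move=> [/is_diag_mxP D0 _]; apply/matrixP => i j; rewrite mxE.
have [->|ij] := eqVneq i j; first by [].
by rewrite !D0 // val_eqE // eq_sym.
Qed.

End NonnegDiagonal.

Arguments nneg_diag_mx1 {R n}.
Arguments nneg_diag_tens {R m n A B}.
Arguments nneg_diag_trmx {R n D}.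

Definition bform (R : pzRingType) n (M : 'M[R]_n) (x y : 'cV[R]_n) : R :=
  (x^T *m M *m y) 0 0.
Arguments bform {R n}.

Section BilinearForm.
Variable R : comPzRingType.
Implicit Types (n : nat).

Lemma bform_tr n (M : 'M[R]_n) x y : bform M x y = bform M^T y x.
Proof.
transitivity ((x^T *m M *m y)^T 0 0); first by rewrite mxE.
by rewrite !trmx_mul trmxK mulmxA.
Qed.

Lemma bform_mulmx m n (A B : 'M[R]_(m, n)) (M : 'M[R]_m) x y :
  bform (A^T *m M *m B) x y = bform M (A *m x) (B *m y).
Proof. by rewrite /bform trmx_mul !mulmxA. Qed.

Lemma bform_mulmxr n (M A : 'M[R]_n) x y : bform M x (A *m y) = bform (M *m A) x y.
Proof. by rewrite /bform !mulmxA. Qed.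

Lemma bformDl n (M N : 'M[R]_n) x y : bform (M + N) x y = bform M x y + bform N x y.
Proof. by rewrite /bform mulmxDr mulmxDl mxE. Qed.

Lemma bformNl n (M : 'M[R]_n) x y : bform (- M) x y = - bform M x y.
Proof. by rewrite /bform mulmxN mulNmx mxE. Qed.

Lemma bformBl n (M : 'M[R]_n) x y z : bform M (x - y) z = bform M x z - bform M y z.
Proof. by rewrite /bform linearB /= !mulmxBl mxE [X in _ + X]mxE. Qed.

Lemma bformBr n (M : 'M[R]_n) x y z : bform M x (y - z) = bform M x y - bform M x z.
Proof. by rewrite /bform mulmxBr mxE [X in _ + X]mxE. Qed.

Lemma bformZr n (M : 'M[R]_n) a x y : bform M x (a *: y) = a * bform M x y.
Proof. by rewrite /bform -scalemxAr mxE. Qed.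

End BilinearForm.

Lemma bform_nneg_diag_ge0 (R : realDomainType) n (D : 'M[R]_n) x :
  nneg_diag_mx D -> 0 <= bform D x x.
Proof.
move=> [/is_diag_mxP D0 D_ge0]; rewrite /bform mxE; apply: sumr_ge0 => k _.
rewrite mxE (bigD1 k) //= big1 => [|l lk]; last by rewrite D0 ?mulr0 // val_eqE.
by rewrite addr0 !mxE mulrAC mulr_ge0 // -expr2 sqr_ge0.
Qed.
Arguments bform_nneg_diag_ge0 {R n D}.

Section SBPFacts.
Variables (R : realFieldType) (n p : nat) (x : 'I_n.+1 -> R) (H Q : 'M[R]_n.+1).
Hypothesis SBP : is_SBP R n p x H Q.

Lemma SBP_nneg_diag : nneg_diag_mx H.
Proof. by case: SBP => _ Hdiag H_gt0 _ _; split=> // i; exact: ltW. Qed.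

Lemma SBP_unitmx : H \in unitmx.
Proof.
case: SBP => _ /diag_mxP[d ->] H_gt0 _ _.
rewrite unitmxE det_diag unitfE; apply/prodf_neq0 => i _.
by have := H_gt0 i; rewrite mxE eqxx mulr1n => /gt_eqF ->.
Qed.

Lemma SBP_deriv_poly (P : {poly R}) : (size P <= p.+1)%N ->
  invmx H *m Q *m \col_i P.[x i] = \col_i P^`().[x i].
Proof.
case: SBP => _ _ _ _ exact_monomials size_P.
have -> : \col_i P.[x i] = \sum_(m < p.+1) P`_m *: \col_i (x i ^+ m).
  apply/matrixP => i j; rewrite summxE !mxE (horner_coef_wide _ size_P).
  by apply: eq_bigr => m _; rewrite !mxE.
have P_expand : P = \sum_(m < p.+1) P`_m *: 'X^m.
  rewrite -poly_def; apply/polyP => m; rewrite coef_poly.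
  by case: ltnP => // m_ge; rewrite nth_default // (leq_trans size_P m_ge).
rewrite mulmx_sumr; apply/matrixP => i j; rewrite summxE !mxE [in RHS]P_expand.
rewrite raddf_sum horner_sum; apply: eq_bigr => m _.
rewrite -scalemxAr exact_monomials -1?ltnS // !mxE /= derivZ hornerZ derivXn.
by rewrite hornerMn hornerXn mulr_natl.
Qed.

End SBPFacts.

Arguments SBP_nneg_diag {R n p x H Q}.
Arguments SBP_unitmx {R n p x H Q}.
Arguments SBP_deriv_poly {R n p x H Q}.

Lemma Emx_tr (R : realFieldType) n : (Emx R n)^T = Emx R n.
Proof. by rewrite /Emx linearB /= !trmx_mul !trmxK. Qed.

Lemma Smx_skew (R : realFieldType) n (Q : 'M[R]_n.+1) :
  Q + Q^T = Emx R n -> (Smx R n Q)^T = - Smx R n Q.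
Proof.
move=> QE; rewrite /Smx linearB /= linearZ /= Emx_tr.
have -> : Q^T = Emx R n - Q by rewrite -QE addrC addKr.
by apply/matrixP => i j; rewrite !mxE; field.
Qed.

Lemma QGblock_skew (R : realFieldType) n (Q : 'M[R]_n.+1) (a b : 'I_3) :
  Q + Q^T = Emx R n -> (QGblock R n Q b a)^T = - QGblock R n Q a b.
Proof.
move=> QE.
have T1 : (2^-1 *: (tlast R n *m (tfirst R n)^T))^T =
          - (- 2^-1 *: (tfirst R n *m (tlast R n)^T)).
  by rewrite linearZ /= trmx_mul trmxK scaleNr opprK.
have T2 : (- 2^-1 *: (tfirst R n *m (tlast R n)^T))^T =
          - (2^-1 *: (tlast R n *m (tfirst R n)^T)).
  by rewrite linearZ /= trmx_mul trmxK scaleNr.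
case: a => -[|[|[|//]]] a3; case: b => -[|[|[|//]]] b3;
  rewrite /QGblock /= ?Smx_skew ?T1 ?T2 ?trmx0 ?oppr0 //;
  congr (- Smx _ _ _); exact: val_inj.
Qed.

Lemma QG_skew (R : realFieldType) n (Q : 'M[R]_n.+1) :
  Q + Q^T = Emx R n -> (QG R n Q)^T = - QG R n Q.
Proof.
move=> QE; apply/matrixP => k l; rewrite !mxE.
have trE (B : 'M[R]_n.+1) i j : B i j = B^T j i by rewrite mxE.
by rewrite trE QGblock_skew // mxE.
Qed.

Definition col_stack (R : Type) m n (u : 'I_m -> 'cV[R]_n) : 'cV[R]_(m * n) :=
  \col_k u (mxtens_unindex k).1 (mxtens_unindex k).2 0.
Arguments col_stack {R m n}.

Lemma col_stackE (R : Type) m n (u : 'I_m -> 'cV[R]_n) a i :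
  col_stack u (mxtens_index (a, i)) 0 = u a i 0.
Proof. by rewrite mxE mxtens_indexK. Qed.

Lemma mul_blocks_col_stack (R : pzSemiRingType) m n (B : 'I_m -> 'I_m -> 'M[R]_n)
    (u : 'I_m -> 'cV[R]_n) :
  \matrix_(k, l) B (mxtens_unindex k).1 (mxtens_unindex l).1
                   (mxtens_unindex k).2 (mxtens_unindex l).2 *m col_stack u
  = col_stack (fun a => \sum_b B a b *m u b).
Proof.
apply/matrixP => k j; case: (mxtens_indexP k) => a i; rewrite [j]ord1 col_stackE.
rewrite mxE big_mxtens summxE; apply: eq_bigr => b _; rewrite mxE.
by apply: eq_bigr => l _; rewrite !mxE !mxtens_indexK.
Qed.

Lemma tens1mx_mul_col_stack (R : pzRingType) m n (A : 'M[R]_n) (u : 'I_m -> 'cV[R]_n) :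
  (1%:M *t A) *m col_stack u = col_stack (fun a => A *m u a).
Proof.
apply/matrixP => k j; case: (mxtens_indexP k) => a i; rewrite [j]ord1 col_stackE.
rewrite mxE big_mxtens (bigD1 a) //= [X in _ + X]big1 ?addr0 => [|b ba]; last first.
  by apply: big1 => l _; rewrite tensmxE mxE eq_sym (negbTE ba) !mul0r.
by rewrite mxE; apply: eq_bigr => l _; rewrite tensmxE col_stackE !mxE eqxx mul1r.
Qed.

Lemma big_ord3_ordS (V : nmodType) (F : 'I_3 -> V) a :
  \sum_b F b = F a + F (ordS a) + F (ordS (ordS a)).
Proof.
have FE i j : val i = val j -> F i = F j by move=> /val_inj ->.
rewrite !big_ord_recr big_ord0 /= add0r.
case: a => -[|[|[|//]]] a3.
- by congr (_ + _ + _); apply: FE.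
- by rewrite [RHS]addrC [RHS]addrA; congr (_ + _ + _); apply: FE.
- by rewrite -[RHS]addrA [RHS]addrC; congr (_ + _ + _); apply: FE.
Qed.

Lemma ordS3K (a : 'I_3) : ordS (ordS (ordS a)) = a.
Proof. by apply: val_inj; case: a => -[|[|[|]]]. Qed.

Lemma trmx_tfirst_mul (R : pzRingType) n m (A : 'M[R]_(n.+1, m)) :
  (tfirst R n)^T *m A = row 0 A.
Proof. by rewrite /tfirst trmx_delta -rowE. Qed.

Lemma trmx_tlast_mul (R : pzRingType) n m (A : 'M[R]_(n.+1, m)) :
  (tlast R n)^T *m A = row ord_max A.
Proof. by rewrite /tlast trmx_delta -rowE. Qed.

Section PeriodicConsistency.
Variables (R : realFieldType) (n : nat) (Q : 'M[R]_n.+1).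

Lemma QGblock_id a : QGblock R n Q a a = Smx R n Q.
Proof. by rewrite /QGblock eqxx. Qed.

Lemma QGblock_ordS a : QGblock R n Q a (ordS a) = 2^-1 *: (tlast R n *m (tfirst R n)^T).
Proof. by rewrite /QGblock eqxx; case: a => -[|[|[|//]]] a3. Qed.

Lemma QGblock_ordSS a :
  QGblock R n Q a (ordS (ordS a)) = - 2^-1 *: (tfirst R n *m (tlast R n)^T).
Proof. by rewrite /QGblock ordS3K eqxx; case: a => -[|[|[|//]]] a3. Qed.

(* Periodicity turns the two interface blocks into (E / 2) u_a, and S + E / 2 = Q. *)
Lemma sum_QGblock_periodic (u : 'I_3 -> 'cV[R]_n.+1) a :
  (forall b, row ord_max (u b) = row 0 (u (ordS b))) ->
  \sum_b QGblock R n Q a b *m u b = Q *m u a.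
Proof.
move=> per; rewrite (big_ord3_ordS _ _ a) QGblock_id QGblock_ordS QGblock_ordSS.
rewrite -!scalemxAl -!mulmxA trmx_tlast_mul per ordS3K trmx_tfirst_mul -per.
rewrite -trmx_tfirst_mul -trmx_tlast_mul -addrA.
have -> : 2^-1 *: (tlast R n *m ((tlast R n)^T *m u a)) +
          - 2^-1 *: (tfirst R n *m ((tfirst R n)^T *m u a)) = 2^-1 *: Emx R n *m u a.
  by rewrite -scalemxAl /Emx mulmxBl !mulmxA scaleNr scalerBr.
by rewrite -mulmxDl /Smx subrK.
Qed.

Lemma QG_mul_col_stack (u : 'I_3 -> 'cV[R]_n.+1) :
  (forall b, row ord_max (u b) = row 0 (u (ordS b))) ->
  QG R n Q *m col_stack u = col_stack (fun a => Q *m u a).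
Proof.
move=> per; rewrite /QG mul_blocks_col_stack; congr col_stack.
by apply/funext => a; exact: sum_QGblock_periodic.
Qed.

Lemma DG_mul_col_stack (H : 'M[R]_n.+1) (u : 'I_3 -> 'cV[R]_n.+1) :
  (forall b, row ord_max (u b) = row 0 (u (ordS b))) ->
  DG R n H Q *m col_stack u = col_stack (fun a => invmx H *m Q *m u a).
Proof.
move=> per; rewrite /DG -mulmxA QG_mul_col_stack // tens1mx_mul_col_stack.
by congr col_stack; apply/funext => a; rewrite mulmxA.
Qed.

End PeriodicConsistency.

Lemma DG_exact_periodic_poly (R : realFieldType) n p x (H Q : 'M[R]_n.+1) :
  is_SBP R n p x H Q ->
  forall P : 'I_3 -> {poly R},
  (forall e, (size (P e) <= p.+1)%N) ->
  (forall e, (P e).[x ord_max] = (P (ordS e)).[x ord0]) ->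
  forall (e : 'I_3) (j : 'I_n.+1),
    (DG R n H Q *m \col_k (P (mxtens_unindex k).1).[x (mxtens_unindex k).2])
      (mxtens_index (e, j)) 0
    = (P e)^`().[x j].
Proof.
move=> SBP P size_P per e j.
have -> : \col_k (P (mxtens_unindex k).1).[x (mxtens_unindex k).2] =
          col_stack (fun a => \col_i (P a).[x i]) by apply/matrixP => k l; rewrite !mxE.
rewrite DG_mul_col_stack => [|b]; last by apply/rowP => l; rewrite !mxE per.
by rewrite col_stackE (SBP_deriv_poly SBP) // mxE.
Qed.

Section LimitSchemeStability.
Variables (R : realFieldType) (nt nx : nat) (Ht Qt : 'M[R]_nt.+1) (Hx Qx : 'M[R]_nx.+1).
Hypotheses (Qt_SBP : Qt + Qt^T = Emx R nt) (Qx_SBP : Qx + Qx^T = Emx R nx).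
Hypotheses (Ht_nneg : nneg_diag_mx Ht) (Ht_unit : Ht \in unitmx).
Hypotheses (Hx_nneg : nneg_diag_mx Hx) (Hx_unit : Hx \in unitmx).

Local Notation Hg := ((1%:M : 'M[R]_3) *t Hx).
Local Notation G := ((1%:M : 'M[R]_1) *t Hg).
Local Notation Hb := (Ht *t Hg).
Local Notation Dx := (Dtil R nt nx Hx Qx).
Local Notation tB := (tBbig R nt nx).
Implicit Types (r : 'cV[R]_(nt.+1 * (3 * nx.+1))).

Lemma Hg_nneg : nneg_diag_mx Hg.
Proof. exact: nneg_diag_tens nneg_diag_mx1 Hx_nneg. Qed.

Lemma G_nneg : nneg_diag_mx G.
Proof. exact: nneg_diag_tens nneg_diag_mx1 Hg_nneg. Qed.

Lemma Hb_nneg : nneg_diag_mx Hb.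
Proof. exact: nneg_diag_tens Ht_nneg Hg_nneg. Qed.

Lemma energyE u : energy R nx Hx u = bform G u u.
Proof. by []. Qed.

Lemma bform_Dt r : bform Hb r (Dtbig R nt nx Ht Qt *m r) = bform (Qt *t Hg) r r.
Proof. by rewrite bform_mulmxr /Dtbig tensmx_mul mulmxA mulmxV // mul1mx mulmx1. Qed.

Lemma bform_outer_tens (t : 'cV[R]_nt.+1) r :
  bform ((t *m t^T) *t Hg) r r = energy R nx Hx ((t *t 1%:M)^T *m r).
Proof.
rewrite energyE -bform_mulmx trmxK; congr bform.
by rewrite trmx_tens trmx1 !tensmx_mul mulmx1 mul1mx mulmx1.
Qed.

Lemma bform_time_SBP r :
  2 * bform (Qt *t Hg) r r =
  energy R nx Hx ((tTbig R nt nx)^T *m r) - energy R nx Hx (tB^T *m r).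
Proof.
rewrite mulr2n mulrDl mul1r {2}bform_tr trmx_tens (nneg_diag_trmx Hg_nneg).
by rewrite -bformDl -tensmxDl Qt_SBP /Emx tensmxDl tensmxNl bformDl bformNl !bform_outer_tens.
Qed.

Lemma Hb_Dx : Hb *m Dx = Ht *t QG R nx Qx.
Proof.
by rewrite /Dtil /DG tensmx_mul mulmx1 mulmxA tensmx_mul mulmx1 mulmxV // tensmx11 mul1mx.
Qed.

Lemma bform_Dx_skew r s : bform Hb r (Dx *m s) = - bform Hb (Dx *m r) s.
Proof.
rewrite bform_mulmxr Hb_Dx bform_tr trmx_tens QG_skew // tensmxNr bformNl.
by rewrite (nneg_diag_trmx Ht_nneg) -Hb_Dx -bform_mulmxr bform_tr (nneg_diag_trmx Hb_nneg).
Qed.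

Lemma bform_diffusion_le0 c r : 0 <= c -> bform Hb r (Dx *m (c *: (Dx *m r))) <= 0.
Proof.
move=> c_ge0; rewrite -scalemxAr bformZr bform_Dx_skew mulrN oppr_le0.
exact/mulr_ge0/bform_nneg_diag_ge0/Hb_nneg.
Qed.

Lemma Hb_SAT : Hb *m (invmx (Htbig R nt nx Ht) *m tB) = tB *m G.
Proof.
rewrite /Htbig invmx_tens ?unitmx1 // invmx1 /tBbig !tensmx_mul mulmxA mulmxV //.
by rewrite mul1mx !mulmx1 mul1mx.
Qed.

Lemma bform_SAT r u0 :
  bform Hb r (SAT R nt nx Ht r u0) = bform G (tB^T *m r) (tB^T *m r - u0).
Proof.
rewrite /bform /SAT trmx_mul trmxK -!mulmxA; congr (fun_of_matrix (_ *m _) 0 0).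
by rewrite !mulmxA -[Hb *m _ *m _]mulmxA Hb_SAT.
Qed.

Lemma limit_scheme_energy_stable nv (v w : 'I_nv -> R) sigs siga rho0 r :
  (forall k, 0 <= w k) -> 0 < sigs -> 0 <= siga ->
  limit_scheme R nt nx nv Ht Qt Hx Qx v w sigs siga rho0 r ->
  energy R nx Hx ((tTbig R nt nx)^T *m r) <= energy R nx Hx rho0.
Proof.
move=> w_ge0 sigs_gt0 siga_ge0 /(congr1 (bform Hb r)).
rewrite bform_Dt !bformBr bformZr bform_SAT.
set c := vavg _ _ _ _ _ _ / sigs.
have c_ge0 : 0 <= c.
  apply: divr_ge0; last exact: ltW.
  by apply: sumr_ge0 => k _; rewrite mulr_ge0 ?sqr_ge0.
set b := tB^T *m r.
have := bform_time_SBP r; have := bform_diffusion_le0 _ r c_ge0.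
have := mulr_ge0 siga_ge0 (bform_nneg_diag_ge0 r Hb_nneg).
have := bform_nneg_diag_ge0 (b - rho0) G_nneg.
rewrite !bformBl !bformBr [bform G rho0 b]bform_tr (nneg_diag_trmx G_nneg) !energyE.
lra.
Qed.

End LimitSchemeStability.

Lemma cvg_mx_entries (R : numFieldType) T (F : set_system T) (FF : Filter F) m n
    (f : T -> 'M[R]_(m, n)) (l : 'M[R]_(m, n)) :
  (forall i j, f x i j @[x --> F] --> l i j) -> f x @[x --> F] --> l.
Proof.
move=> f_cvg; apply/cvg_ballP => e e_gt0.
have : \forall x \near F, forall ij : 'I_m * 'I_n, ball (l ij.1 ij.2) e (f x ij.1 ij.2).
  by apply: filter_forall => -[i j]; move/cvg_ballP : (f_cvg i j); exact.
by apply: filterS => x fx; split=> // i j; exact: (fx (i, j)).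
Qed.

Lemma cvg_mulmx (R : numFieldType) T (F : set_system T) (FF : Filter F) m n p
    (A : 'M[R]_(m, n)) (f : T -> 'M[R]_(n, p)) l :
  f x @[x --> F] --> l -> A *m f x @[x --> F] --> A *m l.
Proof.
move=> f_cvg; apply: cvg_mx_entries => i j; rewrite mxE; under eq_cvg do rewrite mxE.
apply: (@cvg_big _ _ +%R 0 xpredT add_continuous) => // k _; apply: cvgMl_tmp.
exact: (continuous_cvg _ (@coord_continuous R n p k j l)).
Qed.

Lemma cvg_vavg (R : realFieldType) T (F : set_system T) (FF : Filter F) nv m n
    (w : 'I_nv -> R) (f : T -> 'I_nv -> 'M[R]_(m, n)) (l : 'I_nv -> 'M[R]_(m, n)) :
  (forall k, f x k @[x --> F] --> l k) ->
  vavg R nv _ *:%R w (f x) @[x --> F] --> vavg R nv _ *:%R w l.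
Proof.
move=> f_cvg; apply: (@cvg_big _ _ +%R 0 xpredT add_continuous) => // k _.
exact: cvgZl_tmp.
Qed.

Lemma cvg_SAT (R : realFieldType) nt nx (Ht : 'M[R]_nt.+1) T (F : set_system T)
    (FF : Filter F) (f : T -> 'cV[R]_(nt.+1 * (3 * nx.+1))) l u0 :
  f x @[x --> F] --> l -> SAT R nt nx Ht (f x) u0 @[x --> F] --> SAT R nt nx Ht l u0.
Proof.
by move=> f_cvg; apply: cvg_mulmx; apply: cvgB; [exact: cvg_mulmx | exact: cvg_cst].
Qed.

Lemma cvg_at_right0_unique (R : realFieldType) (U : normedModType R) (f g : R -> U) (a b : U) :
  (forall e, 0 < e -> f e = g e) ->
  f e @[e --> (0 : R)^'+] --> a -> g e @[e --> (0 : R)^'+] --> b -> a = b.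
Proof.
move=> fg f_cvg g_cvg; apply: (cvg_unique _ _ g_cvg) => //.
apply: cvg_trans f_cvg; apply: near_eq_cvg.
by apply: filterS (@nbhs_right_gt R 0) => e /fg.
Qed.

Lemma kinetic_eq_rescaled (R : fieldType) m n (e v s a : R) (X Y Z W G S : 'M[R]_(m, n)) :
  e != 0 ->
  X + (v / e) *: Y - e^-1 *: Z + (v / e ^+ 2) *: W = - ((s / e ^+ 2 + a) *: G) - S ->
  v *: W + s *: G + e *: (e *: (X + a *: G + S) + (v *: Y - Z)) = 0.
Proof.
move=> e_neq0 /matrixP kin; apply/matrixP => i j; move: (kin i j); rewrite !mxE.
move/eqP; rewrite -subr_eq0 => /eqP kin_ij.
by rewrite -[RHS](mulr0 (e ^+ 2)) -[in RHS]kin_ij; field.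
Qed.

Lemma vavg_Fick (R : realFieldType) nv N (v w : 'I_nv -> R) s (Y : 'cV[R]_N)
    (G : 'I_nv -> 'cV[R]_N) :
  (forall k, G k = - (v k / s) *: Y) ->
  vavg R nv _ *:%R w (fun k => v k *: G k) = - (vavg R nv _ *%R w (fun k => v k ^+ 2) / s) *: Y.
Proof.
move=> GE; rewrite /vavg; under eq_bigr => k _ do rewrite GE !scalerA.
rewrite -scaler_suml; congr (_ *: _).
by rewrite -mulNr -sumrN mulr_suml; apply: eq_bigr => k _ /=; ring.
Qed.

Arguments vavg_Fick {R nv N v} w {s Y G}.

Section AsymptoticLimit.
Variables (R : realType) (nt nx nv : nat) (Ht Qt : 'M[R]_nt.+1) (Hx Qx : 'M[R]_nx.+1).
Variables (v w : 'I_nv -> R) (sigs siga : R).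
Variables (rho0 : 'cV[R]_(1 * (3 * nx.+1))) (g0 : 'I_nv -> 'cV[R]_(1 * (3 * nx.+1))).
Variables (rho : R -> 'cV[R]_(nt.+1 * (3 * nx.+1))).
Variables (g : R -> 'I_nv -> 'cV[R]_(nt.+1 * (3 * nx.+1))).
Variables (rholim : 'cV[R]_(nt.+1 * (3 * nx.+1))).
Variables (glim : 'I_nv -> 'cV[R]_(nt.+1 * (3 * nx.+1))).
Hypothesis sigs_neq0 : sigs != 0.
Hypothesis scheme : forall eps : R, 0 < eps ->
  micro_macro_scheme R nt nx nv Ht Qt Hx Qx v w sigs siga eps rho0 g0 (rho eps) (g eps).
Hypothesis rho_cvg : rho eps @[eps --> (0 : R)^'+] --> rholim.
Hypothesis g_cvg : forall k, g eps k @[eps --> (0 : R)^'+] --> glim k.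

Local Notation Dt := (Dtbig R nt nx Ht Qt).
Local Notation Dx := (Dtil R nt nx Hx Qx).

Lemma Fick_limit k : glim k = - (v k / sigs) *: (Dx *m rholim).
Proof.
pose kin eps := Dt *m g eps k + siga *: g eps k + SAT R nt nx Ht (g eps k) (g0 k).
pose adv eps :=
  v k *: (Dx *m g eps k) - vavg R nv _ *:%R w (fun j => v j *: (Dx *m g eps j)).
pose kinlim := Dt *m glim k + siga *: glim k + SAT R nt nx Ht (glim k) (g0 k).
pose advlim :=
  v k *: (Dx *m glim k) - vavg R nv _ *:%R w (fun j => v j *: (Dx *m glim j)).
have eps_cvg : (fun eps : R => eps) @ (0 : R)^'+ --> (0 : R).
  by apply: cvg_at_right_filter; exact: cvg_id.
have : v k *: (Dx *m rholim) + sigs *: glim k + 0 *: (0 *: kinlim + advlim) = 0.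
  apply: (@cvg_at_right0_unique _ _
    (fun eps => v k *: (Dx *m rho eps) + sigs *: g eps k + eps *: (eps *: kin eps + adv eps))
    (fun=> 0)); last exact: cvg_cst.
  - move=> eps eps_gt0; case: (scheme _ eps_gt0) => _ /(_ k).
    exact/kinetic_eq_rescaled/lt0r_neq0.
  - apply: cvgD; first by apply: cvgD; apply: cvgZl_tmp; [exact: cvg_mulmx | exact: g_cvg].
    apply: cvgZ => //; apply: cvgD; first apply: cvgZ => //.
      by apply: cvgD; [apply: cvgD; [exact: cvg_mulmx | exact: cvgZl_tmp] | exact: cvg_SAT].
    apply: cvgB; first by apply: cvgZl_tmp; exact: cvg_mulmx.
    by apply: cvg_vavg => j; apply: cvgZl_tmp; exact: cvg_mulmx.
rewrite scale0r addr0 => /eqP; rewrite addr_eq0 => /eqP flux.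
rewrite -[glim k]scale1r -(mulVf sigs_neq0) -scalerA -[sigs *: _]opprK -flux.
by rewrite scalerN scalerA mulrC scaleNr.
Qed.

Lemma macro_limit :
  Dt *m rholim + Dx *m vavg R nv _ *:%R w (fun k => v k *: glim k)
  = - (siga *: rholim) - SAT R nt nx Ht rholim rho0.
Proof.
apply: (@cvg_at_right0_unique _ _
  (fun eps => Dt *m rho eps + Dx *m vavg R nv _ *:%R w (fun k => v k *: g eps k))
  (fun eps => - (siga *: rho eps) - SAT R nt nx Ht (rho eps) rho0)).
- by move=> eps /scheme [].
- apply: cvgD; first exact: cvg_mulmx.
  by apply: cvg_mulmx; apply: cvg_vavg => k; apply: cvgZl_tmp.
- by apply: cvgB; [apply: cvgN; apply: cvgZl_tmp | exact: cvg_SAT].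
Qed.

Lemma limit_scheme_of_micro_macro :
  limit_scheme R nt nx nv Ht Qt Hx Qx v w sigs siga rho0 rholim.
Proof.
move: macro_limit; rewrite (vavg_Fick w Fick_limit) scaleNr mulmxN => /eqP.
by rewrite subr_eq /limit_scheme /= => /eqP ->; rewrite addrC addrA.
Qed.

End AsymptoticLimit.

Theorem theorem3p9 (R : realType) (nt nx nv pt px : nat)
  (tnodes : 'I_nt.+1 -> R) (Ht Qt : 'M[R]_nt.+1)
  (xnodes : 'I_nx.+1 -> R) (Hx Qx : 'M[R]_nx.+1)
  (v w : 'I_nv -> R) (sigs siga : R)
  (rho0 : 'cV[R]_(1 * (3 * nx.+1))) (g0 : 'I_nv -> 'cV[R]_(1 * (3 * nx.+1)))
  (rho : R -> 'cV[R]_(nt.+1 * (3 * nx.+1)))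
  (g : R -> 'I_nv -> 'cV[R]_(nt.+1 * (3 * nx.+1)))
  (rholim : 'cV[R]_(nt.+1 * (3 * nx.+1)))
  (glim : 'I_nv -> 'cV[R]_(nt.+1 * (3 * nx.+1))) :
  is_SBP R nt pt tnodes Ht Qt ->
  is_SBP R nx px xnodes Hx Qx ->
  \sum_(k < nv) w k = 1 ->
  \sum_(k < nv) w k * v k = 0 ->
  (forall k, 0 <= w k) ->
  0 < sigs -> 0 <= siga ->
  (forall eps : R, 0 < eps ->
     micro_macro_scheme R nt nx nv Ht Qt Hx Qx v w sigs siga eps rho0 g0
       (rho eps) (g eps)) ->
  rho eps @[eps --> (0 : R)^'+] --> rholim ->
  (forall k, g eps k @[eps --> (0 : R)^'+] --> glim k) ->
  [/\ (* the eps -> 0 limit satisfies the limit (diffusion) scheme *)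
      limit_scheme R nt nx nv Ht Qt Hx Qx v w sigs siga rho0 rholim,
      (* with the microscopic part determined by Fick's law *)
      (forall k, glim k = - (v k / sigs) *: (Dtil R nt nx Hx Qx *m rholim)),
      (* stability of the limit scheme: final-time energy bounded by the data *)
      (forall r, limit_scheme R nt nx nv Ht Qt Hx Qx v w sigs siga rho0 r ->
         energy R nx Hx ((tTbig R nt nx)^T *m r) <= energy R nx Hx rho0)
    & (* consistency: \tilde D^G_x differentiates exactly every continuous,
         periodic, elementwise polynomial grid function of degree <= px *)
      (forall P : 'I_3 -> {poly R},
         (forall e, (size (P e) <= px.+1)%N) ->
         (forall e, (P e).[xnodes ord_max] = (P (ordS e)).[xnodes ord0]) ->
         forall (e : 'I_3) (j : 'I_nx.+1),
           (DG R nx Hx Qx *m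
              \col_k (P (mxtens_unindex k).1).[xnodes (mxtens_unindex k).2])
             (mxtens_index (e, j)) 0
           = (P e)^`().[xnodes j])].
Proof.
move=> SBPt SBPx _ _ w_ge0 sigs_gt0 siga_ge0 scheme rho_cvg g_cvg.
have sigs_neq0 : sigs != 0 by rewrite gt_eqF.
have [_ _ _ Qt_SBP _] := SBPt; have [_ _ _ Qx_SBP _] := SBPx.
split.
- exact: limit_scheme_of_micro_macro scheme rho_cvg g_cvg.
- exact: Fick_limit scheme rho_cvg g_cvg.
- move=> r; apply: limit_scheme_energy_stable => //;
    [exact: SBP_nneg_diag SBPt | exact: SBP_unitmx SBPt
    | exact: SBP_nneg_diag SBPx | exact: SBP_unitmx SBPx].
- exact: DG_exact_periodic_poly SBPx.
Qed.
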